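(* Let $N=(G=(V,E),\sigma,u,s)$ be a skew-symmetric network, $f$ an IS-flow in $N$, $g$ a shortest IS-flow in the network $(G^+,u_f)$, and $f':=f\oplus g$. Let $k$ and $k'$ be the minimum numbers of arcs of an r-augmenting path for $f$ and for $f'$, respectively (with $\min\emptyset=+\infty$). Then $k'\ge k$. Moreover, if $g$ is a shortest blocking IS-flow in $(G^+,u_f)$, then $k'>k$.
   Context: A skew-symmetric graph is a finite directed graph $G=(V,E)$ (parallel arcs allowed) with a map $\sigma$ of $V\cup E$ onto itself such that $\sigma(x)\ne x$, $\sigma(\sigma(x))=x$ for all $x$, $\sigma(V)=V$, and for each arc $a$ from $v$ to $w$, $\sigma(a)$ is an arc from $\sigma(w)$ to $\sigma(v)$. A function on arcs is symmetric if it takes equal values on $a$ and $\sigma(a)$. A skew-symmetric network $(H,\sigma,h,s)$ has a symmetric capacity $h:$ arcs $\to\mathbb Z_{\ge0}$ and source $s$, sink $s'=\sigma(s)$. A flow is a nonnegative function bounded by the capacity with conservation at all nodes other than $s,s'$; its value $|g|$ is the net outflow at $s$. An IS-flow is an integer-valued symmetric flow. $G^+=(V,E^+)$ is obtained from $G$ by adding for each arc $a=(x,y)\in E$ a reverse arc $a^R=(y,x)$, with $\sigma(a^R)=(\sigma(a))^R$; residual capacities $u_f(a)=u(a)-f(a)$ for $a\in E$, $u_f(a^R)=f(a)$; $(G^+,u_f)$ is a skew-symmetric network. For an IS-flow $g$ in $(G^+,u_f)$, $f\oplus g$ is the IS-flow in $N$ given by $(f\oplus g)(a)=f(a)+g(a)-g(a^R)$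 for $a\in E$. For symmetric nonnegative integer $h$, a path $P$ is $h$-regular if $h(a)>0$ for all arcs $a$ of $P$ and $h(a)\ge2$ for every arc $a$ of $P$ whose mate $\sigma(a)$ is also on $P$. An r-augmenting path for $f$ is a $u_f$-regular path from $s$ to $s'$ in $G^+$. A regular path is one containing no pair of arcs $a,\sigma(a)$. The split-graph $S(H,h)$ replaces each arc $a=(x,y)$ by parallel arcs $a_1,a_2$ from $x$ to $y$ with capacities $\lceil h(a)/2\rceil,\lfloor h(a)/2\rfloor$, deleting zero-capacity arcs, with $\sigma(a_i)=(\sigma(a))_i$. $\mathrm{r\text{-}dist}_{S(H,h)}(s,s')$ is the minimum number of arcs of a regular $s$ to $s'$ path in $S(H,h)$ ($+\infty$ if none). For an IS-flow $g$ in $(H,h)$ with arc set $W$: $g$ is shortest if $\sum_{e\in W}g(e)=|g|\cdot\mathrm{r\text{-}dist}_{S(H,h)}(s,s')$; $g$ is shortest blocking if it is shortest and $\mathrm{r\text{-}dist}_{S(H,h-g)}(s,s')>\mathrm{r\text{-}dist}_{S(H,h)}(s,s')$. *)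

From Stdlib Require Import ClassicalEpsilon.
From mathcomp Require Import all_boot all_order all_algebra.
Set Implicit Arguments. Unset Strict Implicit. Unset Printing Implicit Defensive.
Import GRing.Theory Num.Theory.

(* A directed graph is given by a finite vertex type V, a finite arc type A
   (parallel arcs allowed) and tail/head maps. *)

Section Generic.
Variables (V A : finType) (tl hd : A -> V).

Definition skew_symmetric (sv : V -> V) (sa : A -> A) : Prop :=
  [/\ involutive sv, forall v, sv v != v, involutive sa, forall a, sa a != a
    & forall a, tl (sa a) = sv (hd a) /\ hd (sa a) = sv (tl a)].

Fixpoint is_path (x t : V) (p : seq A) : bool :=
  match p with
  | [::] => x == t
  | a :: p' => (tl a == x) && is_path (hd a) t p'
  end.

Definition symmetric_fun (sa : A -> A) (h : A -> nat) : Prop :=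
  forall a, h (sa a) = h a.

Definition is_ISflow (sv : V -> V) (sa : A -> A) (h : A -> nat) (s : V)
  (g : A -> nat) : Prop :=
  [/\ symmetric_fun sa g, forall a, g a <= h a
    & forall v, v != s -> v != sv s ->
        \sum_(a | tl a == v) g a = \sum_(a | hd a == v) g a].

Definition flow_value (s : V) (g : A -> nat) : int :=
  (Posz (\sum_(a | tl a == s) g a) - Posz (\sum_(a | hd a == s) g a))%R.

Definition h_regular (sa : A -> A) (h : A -> nat) (p : seq A) : bool :=
  all (fun a => 0 < h a) p && all (fun a => (sa a \in p) ==> (2 <= h a)) p.

Definition regular (sa : A -> A) (p : seq A) : bool :=
  all (fun a => sa a \notin p) p.

End Generic.

(* minimum length of a sequence satisfying P; None stands for +infinity *)
Definition mindist (T : finType) (P : seq T -> bool) : option nat :=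
  match excluded_middle_informative (exists n, [exists t : n.-tuple T, P t]) with
  | left H => Some (ex_minn H)
  | right _ => None
  end.

Definition ole (x y : option nat) : bool :=
  match x, y with
  | _, None => true
  | None, Some _ => false
  | Some m, Some n => m <= n
  end.
Definition olt (x y : option nat) : bool :=
  match x, y with
  | None, _ => false
  | Some _, None => true
  | Some m, Some n => m < n
  end.

(* The graph G^+ : arcs inl a = a, inr a = a^R *)
Section Plus.
Variables (V A : finType) (tl hd : A -> V) (sa : A -> A).
Definition tlP (e : A + A) : V := match e with inl a => tl a | inr a => hd a end.
Definition hdP (e : A + A) : V := match e with inl a => hd a | inr a => tl a end.
Definition saP (e : A + A) : A + A :=
  match e with inl a => inl (sa a) | inr a => inr (sa a) end.
Definition resid (u f : A -> nat) (e : A + A) : nat :=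
  match e with inl a => u a - f a | inr a => f a end.
Definition oplus (f : A -> nat) (g : A + A -> nat) (a : A) : nat :=
  f a + g (inl a) - g (inr a).
End Plus.

(* The split graph S(H,h): arc (a,true) = a_1 with capacity ceil(h a/2),
   (a,false) = a_2 with capacity floor(h a/2); zero-capacity arcs deleted;
   sigma(a_i) = (sigma a)_i. *)
Section Split.
Variables (V A : finType) (tl hd : A -> V) (sa : A -> A).
Definition splitcap (h : A -> nat) (e : A * bool) : nat :=
  if e.2 then uphalf (h e.1) else (h e.1)./2.
Definition tlS (e : A * bool) := tl e.1.
Definition hdS (e : A * bool) := hd e.1.
Definition saS (e : A * bool) : A * bool := (sa e.1, e.2).
Definition rdist_split (sv : V -> V) (h : A -> nat) (s : V) : option nat :=
  mindist (fun p : seq (A * bool) =>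
    [&& is_path tlS hdS s (sv s) p, all (fun e => 0 < splitcap h e) p
      & regular saS p]).
(* shortest IS-flow (convention 0 * oo = 0, n * oo = oo for n > 0) *)
Definition shortest (sv : V -> V) (h : A -> nat) (s : V) (g : A -> nat) : Prop :=
  match rdist_split sv h s with
  | Some d => Posz (\sum_a g a) = (flow_value tl hd s g * Posz d)%R
  | None => \sum_a g a = 0
  end.
Definition shortest_blocking (sv : V -> V) (h : A -> nat) (s : V) (g : A -> nat)
  : Prop :=
  shortest sv h s g /\
  olt (rdist_split sv h s) (rdist_split sv (fun a => h a - g a) s).
End Split.

(* minimum number of arcs of an r-augmenting path for f *)
Definition raug_dist (V A : finType) (tl hd : A -> V) (sv : V -> V) (sa : A -> A)
  (u : A -> nat) (s : V) (f : A -> nat) : option nat :=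
  mindist (fun p : seq (A + A) =>
    is_path (tlP tl hd) (hdP tl hd) s (sv s) p &&
    h_regular (saP sa) (resid u f) p).

From mathcomp Require Import all_boot all_order all_algebra.
From mathcomp Require Import zify ring.
From Stdlib Require Import ClassicalEpsilon FunctionalExtensionality.
Set Implicit Arguments. Unset Strict Implicit. Unset Printing Implicit Defensive.
Import GRing.Theory Num.Theory.

(* Let d be the regular s-s' distance in the split graph of (G^+, u_f).  Regular
   paths of the split graph project to u_f-regular paths of the same length,
   so k <= d.  Stacking a simple r-augmenting path P for f' = f (+) g and its
   mirror sa P on g, and cancelling flow on opposite arcs a, a^R, gives an
   IS-flow in (G^+, u_f) of value |g| + 2 and total at most sum g + 2 |P|.
   Every IS-flow x satisfies |x| d <= sum x: x halves into an integer flow y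
   with x = y + y o sa, whose support paths are u_f-regular and so have at
   least d arcs, and layering the vertices by distance from s gives
   |y| d <= sum y.  Since g is shortest, sum g = |g| d, hence d <= |P|.  If
   |P| = d every bound is tight: nothing cancels and P is (u_f - g)-regular,
   so the distance does not grow and g is not blocking. *)

Section MinDist.
Variables (T : finType) (P : seq T -> bool).

Lemma mindist_le_size p : P p -> exists2 n, mindist P = Some n & n <= size p.
Proof.
move=> Pp; rewrite /mindist; case: excluded_middle_informative => [ex|noex].
  exists (ex_minn ex) => //; case: ex_minnP => m _; apply.
  by apply/existsP; exists (in_tuple p).
by case: noex; exists (size p); apply/existsP; exists (in_tuple p).
Qed.

Lemma mindist_someP n : mindist P = Some n ->
  (exists2 p, P p & size p = n) /\ (forall p, P p -> n <= size p).
Proof.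
rewrite /mindist; case: excluded_middle_informative => // ex.
case: ex_minnP => m /existsP [t Pt] min_m [<-]; split.
  by exists t; rewrite ?size_tuple.
by move=> p Pp; apply: min_m; apply/existsP; exists (in_tuple p).
Qed.

End MinDist.

Section Paths.
Variables (V A : finType) (tl hd : A -> V).
Local Notation is_path := (is_path tl hd).

Lemma is_path_rcons x t p a :
  is_path x t (rcons p a) = is_path x (tl a) p && (hd a == t).
Proof.
elim: p x => [|b p IH] x /=; last by rewrite IH andbA.
by rewrite eq_sym.
Qed.

Lemma is_path_suffix x t p a q :
  is_path x t (p ++ a :: q) -> is_path (tl a) t (a :: q).
Proof.
elim: p x => [|b p IH] x /=; last by case/andP => _; apply: IH.
by case/andP => /eqP -> ->; rewrite eqxx.
Qed.

Lemma is_path_uniq x t p : is_path x t p ->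
  exists q, [/\ is_path x t q, uniq q, size q <= size p & {subset q <= p}].
Proof.
elim: p x => [|a p IH] x /=; first by move=> xt; exists [::].
case/andP => /eqP tl_a /IH [q [path_q uniq_q size_q sub_q]].
case: (boolP (a \in q)) => [a_q|a_q].
  move: path_q uniq_q size_q sub_q; case/splitPr: a_q => q1 q2.
  rewrite -tl_a => /is_path_suffix path_q2.
  rewrite cat_uniq size_cat /= => /and3P [_ _ uniq_q2] size_q sub_q.
  exists (a :: q2); split => //=; first lia.
  move=> b; rewrite inE => /predU1P [->|b_q2]; first exact: mem_head.
  by rewrite inE sub_q ?orbT // mem_cat inE b_q2 !orbT.
exists (a :: q); split => /=; rewrite ?tl_a ?eqxx ?a_q //.
by move=> b /predU1P [->|/sub_q b_p]; rewrite inE ?eqxx ?b_p ?orbT.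
Qed.

End Paths.

Lemma is_path_map (V W B : finType) (tl hd : B -> V) (F : W -> B) x t p :
  is_path tl hd x t (map F p) = is_path (tl \o F) (hd \o F) x t p.
Proof. by elim: p x => //= a p IH x; rewrite IH. Qed.

Lemma h_regular_sub (B : finType) (sa : B -> B) (h : B -> nat) (p q : seq B) :
  h_regular sa h p -> {subset q <= p} -> h_regular sa h q.
Proof.
case/andP => /allP pos /allP mate sub_qp; apply/andP; split; apply/allP => e e_q.
  exact: pos (sub_qp _ e_q).
by apply/implyP => /sub_qp sa_e_p; have := mate e (sub_qp _ e_q); rewrite sa_e_p.
Qed.

Lemma enum_rank_neq (T : finType) (x y : T) : x != y -> enum_rank x != enum_rank y.
Proof. by apply: contra => /eqP/enum_rank_inj ->. Qed.

Section SkewSymmetric.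
Variables (V A : finType) (tl hd : A -> V) (sv : V -> V) (sa : A -> A).
Hypothesis skew : skew_symmetric tl hd sv sa.

Lemma skew_svK : involutive sv. Proof. by case: skew. Qed.
Lemma skew_sv_neq v : sv v != v. Proof. by case: skew. Qed.
Lemma skew_saK : involutive sa. Proof. by case: skew. Qed.
Lemma skew_sa_neq a : sa a != a. Proof. by case: skew. Qed.
Lemma skew_tl a : tl (sa a) = sv (hd a). Proof. by case: skew => _ _ _ _ /(_ a) []. Qed.
Lemma skew_hd a : hd (sa a) = sv (tl a). Proof. by case: skew => _ _ _ _ /(_ a) []. Qed.

End SkewSymmetric.

(* A regular path in the split graph S(H, h) uses a_1 and a_2 for the two
   mates a, sa a of a pair; a lone arc can always use a_1. *)
Section SplitGraph.
Variables (V B : finType) (tl hd : B -> V) (sa : B -> B).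
Hypotheses (saK : involutive sa) (sa_neq : forall b, sa b != b).

Definition split_regular_path (h : B -> nat) x t (q : seq (B * bool)) :=
  [&& is_path (tlS tl) (hdS hd) x t q, all (fun e => 0 < splitcap h e) q
    & regular (saS sa) q].

Lemma rdist_split_le_size (sv : V -> V) (h : B -> nat) s q :
  split_regular_path h s (sv s) q ->
  exists2 n, rdist_split tl hd sa sv h s = Some n & n <= size q.
Proof. exact: mindist_le_size. Qed.

Definition split_bit (p : seq B) (b : B) : bool :=
  (sa b \notin p) || (enum_rank b < enum_rank (sa b)).

Lemma h_regular_split (h : B -> nat) x t p :
  is_path tl hd x t p -> h_regular sa h p ->
  exists2 q, size q = size p & split_regular_path h x t q.
Proof.
move=> path_p /andP [/allP pos /allP mate].
exists [seq (b, split_bit p b) | b <- p]; first by rewrite size_map.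
apply/and3P; split; first by rewrite is_path_map.
- apply/allP => _ /mapP [b b_p ->]; rewrite /splitcap /=.
  have := pos b b_p; case: ifP => [_|]; first by case: (h b).
  rewrite /split_bit => /negbT; rewrite negb_or negbK => /andP [sa_b_p _].
  by have := mate b b_p; rewrite sa_b_p; case: (h b) => [|[]].
- apply/allP => _ /mapP [b b_p ->]; apply/mapP => -[c c_p [sa_b_c bits]].
  move: bits; rewrite -{c}sa_b_c in c_p *; rewrite /split_bit saK b_p c_p /=.
  by have := enum_rank_neq (sa_neq b); rewrite eq_sym neq_ltn; case: ltngtP.
Qed.

Lemma split_h_regular (h : B -> nat) x t q :
  symmetric_fun sa h -> split_regular_path h x t q ->
  is_path tl hd x t (map fst q) && h_regular sa h (map fst q).
Proof.
move=> h_sym /and3P [path_q /allP cap /allP reg]; rewrite is_path_map path_q /=.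
apply/andP; split; apply/allP => _ /mapP [[b i] bi_q ->] /=.
  by have := cap _ bi_q; rewrite /splitcap /=; case: ifP; case: (h b) => [|[]].
apply/implyP => /mapP [[c j] cj_q /= sa_b_c]; rewrite -{c}sa_b_c in cj_q.
have ij : j != i by apply: contraTneq cj_q => ->; exact: reg _ bi_q.
have := cap _ cj_q; have := cap _ bi_q; rewrite /splitcap /= h_sym.
by move: ij; clear bi_q cj_q; case: i; case: j => //; case: (h b) => [|[|n]].
Qed.

Lemma regular_dist_le_rdist_split (sv : V -> V) (h : B -> nat) s d :
  symmetric_fun sa h -> rdist_split tl hd sa sv h s = Some d ->
  exists2 k, mindist (fun p => is_path tl hd s (sv s) p && h_regular sa h p) = Some k
           & k <= d.
Proof.
move=> h_sym /mindist_someP [[q /(split_h_regular h_sym) reg_q <-] _].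
have [k -> k_q] := mindist_le_size (P := fun p => is_path tl hd s (sv s) p && h_regular sa h p) reg_q.
by exists k; rewrite // size_map in k_q.
Qed.

End SplitGraph.

Local Open Scope ring_scope.

Section FlowValue.
Variables (V B : finType) (tl hd : B -> V).
Local Notation flow_value := (flow_value tl hd).

Definition incidence (v : V) (b : B) : int := (tl b == v)%:R - (hd b == v)%:R.

Lemma flow_valueE (y : B -> nat) v :
  flow_value v y = \sum_b (y b)%:Z * incidence v b.
Proof.
rewrite /flow_value !(big_morph Posz PoszD (erefl _)) /=.
rewrite [X in X - _]big_mkcond [X in _ - X]big_mkcond /= -sumrB.
apply: eq_bigr => b _; rewrite /incidence mulrBr.
by case: (tl b == v); case: (hd b == v); rewrite ?mulr1 ?mulr0.
Qed.

Lemma eq_flow_value (y z : B -> nat) v : y =1 z -> flow_value v y = flow_value v z.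
Proof. by move=> yz; rewrite !flow_valueE; apply: eq_bigr => b _; rewrite yz. Qed.

Lemma flow_valueD (y z : B -> nat) v :
  flow_value v (fun b => y b + z b)%N = flow_value v y + flow_value v z.
Proof. by rewrite !flow_valueE -big_split; apply: eq_bigr => b _; rewrite PoszD mulrDl. Qed.

Lemma sum_indicator (F : V -> int) (w : V) : \sum_v F v * (w == v)%:R = F w.
Proof.
rewrite (bigD1 w) //= eqxx mulr1 big1 ?addr0 // => v /negbTE vw.
by rewrite eq_sym vw mulr0.
Qed.

Lemma sum_flow_value_weighted (phi : V -> int) (y : B -> nat) :
  \sum_v phi v * flow_value v y = - \sum_b (y b)%:Z * (phi (hd b) - phi (tl b)).
Proof.
under eq_bigr => v _ do rewrite flow_valueE mulr_sumr.
rewrite exchange_big /= -sumrN; apply: eq_bigr => b _.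
under eq_bigr => v _ do rewrite /incidence mulrCA mulrBr.
rewrite -mulr_sumr sumrB !sum_indicator; ring.
Qed.

Lemma sum_flow_value (y : B -> nat) : \sum_v flow_value v y = 0.
Proof.
have := sum_flow_value_weighted (fun=> 1) y.
under [X in X = _]eq_bigr => v _ do rewrite mul1r.
by move=> ->; rewrite big1 ?oppr0 // => b _; rewrite subrr mulr0.
Qed.

Lemma flow_value_sink (y : B -> nat) s t : s != t ->
  (forall v, v != s -> v != t -> flow_value v y = 0) ->
  flow_value t y = - flow_value s y.
Proof.
move=> st cons; have ts : t != s by rewrite eq_sym.
have := sum_flow_value y; rewrite (bigD1 s) //= (bigD1 t) ?ts //= big1 ?addr0.
  by move/eqP; rewrite addrC addr_eq0 => /eqP.
by move=> v /andP [vs vt]; rewrite cons.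
Qed.

Lemma flow_value_path_count x t p v : is_path tl hd x t p ->
  flow_value v (fun b => count_mem b p) = (x == v)%:R - (t == v)%:R.
Proof.
elim: p x => [|a p IH] x /=.
  by move=> /eqP ->; rewrite subrr flow_valueE big1 // => b _; rewrite mul0r.
case/andP => /eqP tl_a /IH; rewrite (flow_valueD (fun b => (a == b)%N)) => ->.
rewrite flow_valueE (bigD1 a) //= eqxx big1 ?addr0 => [|b /negbTE ab]; last first.
  by rewrite eq_sym ab mul0r.
by rewrite /incidence tl_a mul1r addrA subrK.
Qed.

End FlowValue.

Lemma flow_value_mirror (V B : finType) (tl hd : B -> V) (sv : V -> V) (sa : B -> B)
    (y : B -> nat) v :
  skew_symmetric tl hd sv sa ->
  flow_value tl hd v (y \o sa) = - flow_value tl hd (sv v) y.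
Proof.
move=> skew; rewrite !flow_valueE (reindex_inj (inv_inj (skew_saK skew))) /= -sumrN.
apply: eq_bigr => b _; rewrite (skew_saK skew) /incidence (skew_tl skew) (skew_hd skew).
by rewrite !(inv_eq (skew_svK skew)); ring.
Qed.

Lemma sum_count_mem (T : finType) (p : seq T) : (\sum_e count_mem e p)%N = size p.
Proof.
elim: p => [|a p IH] /=; first by rewrite big1.
rewrite big_split /= IH (bigD1 a) //= eqxx big1 // => e /negbTE ea.
by rewrite eq_sym ea.
Qed.

Section Orientation.
Variable N : eqType.

Definition edge_net (e : N * N) (n : N) : int := (e.1 == n)%:R - (e.2 == n)%:R.

Definition oriented_net (o : bool) (e : N * N) n : int :=
  if o then edge_net e n else - edge_net e n.

Fixpoint net (E : seq (N * N)) (os : seq bool) n : int :=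
  if (E, os) is (e :: E', o :: os') then oriented_net o e n + net E' os' n else 0.

Definition incident n (e : N * N) := (e.1 == n) || (e.2 == n).

Definition other_end w (e : N * N) := if e.1 == w then e.2 else e.1.

Lemma net_cat E1 E2 os1 os2 n : size os1 = size E1 ->
  net (E1 ++ E2) (os1 ++ os2) n = net E1 os1 n + net E2 os2 n.
Proof.
elim: E1 os1 => [|e E1 IH] [|o os1] //=; first by rewrite add0r.
by case=> size_os1; rewrite IH // addrA.
Qed.

Lemma oriented_net_bound o e n : -1 <= oriented_net o e n <= 1.
Proof. by rewrite /oriented_net /edge_net; case: o; case: eqP; case: eqP. Qed.

Lemma edge_net_not_incident e n : ~~ incident n e -> edge_net e n = 0.
Proof.
by rewrite /incident negb_or => /andP [/negbTE e1n /negbTE e2n]; rewrite /edge_net e1n e2n subrr.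
Qed.

Lemma net_not_incident E os n : ~~ has (incident n) E -> net E os n = 0.
Proof.
elim: E os => [|e E IH] [|o os] //=; rewrite negb_or => /andP [ne nE].
by rewrite IH // /oriented_net edge_net_not_incident // oppr0 if_same addr0.
Qed.

(* Two edges through w are replaced by the single edge joining their other
   ends: oriented consistently through w, their contributions add up to it. *)
Lemma net_merge w e1 e2 E2 E3 o os2 os3 n :
  incident w e1 -> incident w e2 -> size os2 = size E2 ->
  net (e1 :: E2 ++ e2 :: E3)
    ((if e1.1 == w then ~~ o else o) :: os2 ++ (if e2.1 == w then o else ~~ o) :: os3) n
  = net ((other_end w e1, other_end w e2) :: E2 ++ E3) (o :: os2 ++ os3) n.
Proof.
move: e1 e2 => [p1 q1] [p2 q2]; rewrite /incident /other_end /= => w1 w2 size_os2.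
rewrite !net_cat //= /oriented_net /edge_net /=.
case: eqP w1 => [-> _|_ /eqP->]; case: eqP w2 => [-> _|_ /eqP->]; case: o => /=; ring.
Qed.

Lemma balanced_orientation E :
  exists2 os, size os = size E & forall n, -1 <= net E os n <= 1.
Proof.
move: {2}(size E) (leqnn (size E)) => k; elim: k E => [|k IH] [|e E] size_E;
  try (by exists [::] => //= n; rewrite lerN10 ler01).
pose shared w := incident w e && has (incident w) E.
case: (boolP (shared e.1 || shared e.2)) => [shared_e|lone].
  have [w /andP [ew /hasP [e2 e2_E we2]]] : exists w, shared w.
    by case/orP: shared_e => ?; eexists; eassumption.
  case/splitPr: e2_E size_E => E2 E3 size_E.
  set merged := (other_end w e, other_end w e2) :: E2 ++ E3.
  have size_merged : (size merged <= k)%N by move: size_E; rewrite /= !size_cat /=; lia.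
  have [[|o os] // [size_os] bal] := IH merged size_merged.
  have E2_os : (size E2 <= size os)%N by rewrite size_os size_cat leq_addr.
  exists ((if e.1 == w then ~~ o else o) ::
          take (size E2) os ++ (if e2.1 == w then o else ~~ o) :: drop (size E2) os).
    by rewrite /= !size_cat /= size_takel // size_drop size_os size_cat; lia.
  by move=> n; rewrite net_merge ?size_takel // cat_take_drop.
have [os size_os bal] := IH E size_E.
exists (true :: os) => [|n /=]; first by rewrite /= size_os.
case: (boolP (incident n e)) => [ne|ne]; last by rewrite edge_net_not_incident ?add0r.
rewrite net_not_incident ?addr0; first exact: (oriented_net_bound true).
by apply: contra lone; case/orP: (ne) => /eqP -> nE; rewrite /shared nE ne ?orbT.
Qed.

Lemma net_map (T : eqType) (F : T -> N * N) (r : seq T) os n :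
  uniq r -> size os = size r ->
  net (map F r) os n = \sum_(b <- r) oriented_net (nth false os (index b r)) (F b) n.
Proof.
elim: r os => [|a r IH] [|o os] //=; first by rewrite big_nil.
case/andP => a_r uniq_r [size_os]; rewrite big_cons eqxx IH //; congr (_ + _).
by apply: eq_big_seq => b b_r /=; case: eqP => // ab; rewrite ab b_r in a_r.
Qed.

End Orientation.

(* Halve x, rounding the odd arcs along a balanced orientation of the
   multigraph they form on the vertex pairs {v, sv v}. *)
Section Halving.
Variables (V B : finType) (tl hd : B -> V) (sv : V -> V) (sa : B -> B).
Hypothesis skew : skew_symmetric tl hd sv sa.
Variable x : B -> nat.
Hypothesis x_sym : symmetric_fun sa x.

Local Notation svK := (skew_svK skew).
Local Notation saK := (skew_saK skew).

Definition node_pair (v : V) : V :=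
  if (enum_rank v <= enum_rank (sv v))%N then v else sv v.

Lemma node_pair_sv v : node_pair (sv v) = node_pair v.
Proof.
have := enum_rank_neq (skew_sv_neq skew v).
by rewrite /node_pair svK eq_sym neq_ltn; case: ltngtP.
Qed.

Lemma node_pair_eq p v : (node_pair p == node_pair v) = (p == v) || (p == sv v).
Proof.
apply/idP/idP; last by case/orP => /eqP ->; rewrite ?node_pair_sv.
have node_pairP z : node_pair z = z \/ node_pair z = sv z by rewrite /node_pair; case: ifP; [left|right].
case: (node_pairP p) (node_pairP v) => -> [] -> /eqP pv; rewrite ?pv ?eqxx ?orbT //.
  by rewrite -pv svK eqxx orbT.
by rewrite -[p]svK pv svK eqxx.
Qed.

Lemma node_pair_indicator p v :
  (p == v)%:R + (p == sv v)%:R = (node_pair p == node_pair v)%:R :> int.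
Proof.
rewrite node_pair_eq; case: (eqVneq p v) => [->|] /=; last by rewrite add0r.
by rewrite eq_sym (negbTE (skew_sv_neq skew v)) addr0.
Qed.

Definition arc_rep (b : B) : bool := (enum_rank b < enum_rank (sa b))%N.

Lemma arc_rep_sa b : arc_rep (sa b) = ~~ arc_rep b.
Proof.
have := enum_rank_neq (skew_sa_neq skew b).
by rewrite /arc_rep saK eq_sym neq_ltn; case: ltngtP.
Qed.

Definition odd_arcs := [seq b <- index_enum B | arc_rep b && odd (x b)].

Definition odd_edges := [seq (node_pair (tl b), node_pair (hd b)) | b <- odd_arcs].

Variable os : seq bool.
Hypothesis size_os : size os = size odd_edges.

Definition orientation (b : B) := nth false os (index b odd_arcs).

Definition forward (b : B) :=
  if arc_rep b then orientation b else ~~ orientation (sa b).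

Definition half_flow (b : B) := if forward b then uphalf (x b) else (x b)./2.

Definition rounding_excess (b : B) : int :=
  if odd (x b) then (if forward b then 1 else -1) else 0.

Lemma forward_sa b : forward (sa b) = ~~ forward b.
Proof. by rewrite /forward arc_rep_sa saK; case: (arc_rep b); rewrite ?negbK. Qed.

Lemma half_flow_sa b : (half_flow b + half_flow (sa b))%N = x b.
Proof.
rewrite /half_flow forward_sa x_sym uphalf_half.
by case: (forward b) => /=; have := odd_double_half (x b); rewrite -addnn; lia.
Qed.

Lemma half_flow_excess b : 2 * (half_flow b)%:Z - (x b)%:Z = rounding_excess b.
Proof.
rewrite /rounding_excess /half_flow uphalf_half; have := odd_double_half (x b).
by rewrite -addnn; case: (odd (x b)); case: (forward b) => /= ?; lia.
Qed.

Lemma flow_value_half_flow v :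
  2 * flow_value tl hd v half_flow - flow_value tl hd v x = net odd_edges os (node_pair v).
Proof.
rewrite !flow_valueE mulr_sumr -sumrB.
under eq_bigr => b _ do rewrite mulrA -mulrBl half_flow_excess.
rewrite (bigID arc_rep) /= [X in _ + X](reindex_inj (inv_inj saK)) /=.
under [X in _ + X]eq_bigl => b do rewrite arc_rep_sa negbK.
rewrite -big_split /= /odd_edges net_map ?filter_uniq ?index_enum_uniq //; last first.
  by rewrite size_os size_map.
rewrite big_filter (bigID (fun b => odd (x b))) /= [X in _ + X]big1 ?addr0; last first.
  by move=> b /andP [_ /negbTE even_b]; rewrite /rounding_excess x_sym even_b !mul0r addr0.
apply: eq_bigr => b /andP [rep_b odd_b].
rewrite /rounding_excess x_sym odd_b forward_sa /forward rep_b -/(orientation b).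
rewrite /incidence (skew_tl skew) (skew_hd skew) !(inv_eq svK).
rewrite /oriented_net /edge_net /= -!node_pair_indicator.
by case: (orientation b) => /=; ring.
Qed.

Hypothesis balanced : forall n, -1 <= net odd_edges os n <= 1.

Lemma half_flow_conserved v :
  flow_value tl hd v x = 0 -> flow_value tl hd v half_flow = 0.
Proof.
move=> x_v; have := balanced (node_pair v).
by rewrite -flow_value_half_flow x_v subr0; lia.
Qed.

End Halving.

Lemma symmetric_flow_split (V B : finType) (tl hd : B -> V) (sv : V -> V) (sa : B -> B)
    (s : V) (x : B -> nat) :
  skew_symmetric tl hd sv sa -> symmetric_fun sa x ->
  (forall v, v != s -> v != sv s -> flow_value tl hd v x = 0) ->
  exists y : B -> nat, (forall b, y b + y (sa b) = x b)%N /\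
    (forall v, v != s -> v != sv s -> flow_value tl hd v y = 0).
Proof.
move=> skew x_sym x_cons.
have [os size_os balanced] := balanced_orientation (odd_edges tl hd sv sa x).
exists (half_flow sa x os); split; first exact: (half_flow_sa skew x_sym).
by move=> v vs vs'; apply: (half_flow_conserved skew x_sym size_os balanced); apply: x_cons.
Qed.

(* Layer the vertices by their distance from s in the support of y (capped
   at D): a unit of flow climbs at most one layer per arc, and D in all. *)
Section Layering.
Variables (V B : finType) (tl hd : B -> V) (y : B -> nat) (s t : V) (D : nat).

Fixpoint reach (k : nat) (v : V) : bool :=
  if k is k'.+1 then
    reach k' v || [exists b, [&& (0 < y b)%N, hd b == v & reach k' (tl b)]]
  else v == s.

Lemma reach_path k v : reach k v ->
  exists p, [/\ is_path tl hd s v p, all (fun b => 0 < y b)%N p & (size p <= k)%N].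
Proof.
elim: k v => [|k IH] v /=; first by move=> /eqP ->; exists [::]; rewrite /= eqxx.
case/orP => [/IH [p [path_p pos_p size_p]]|/existsP [b /and3P [y_b /eqP <- /IH]]].
  by exists p; split => //; apply: leqW.
move=> [p [path_p pos_p size_p]]; exists (rcons p b).
by rewrite is_path_rcons path_p eqxx all_rcons y_b pos_p size_rcons.
Qed.

Lemma reach_source k : reach k s.
Proof. by elim: k => [|k IH] /=; rewrite ?eqxx ?IH. Qed.

Definition layer (v : V) : nat := \sum_(k < D) ~~ reach k v.

Lemma layer_source : layer s = 0%N.
Proof. by rewrite /layer big1 // => k _; rewrite reach_source. Qed.

Lemma layer_arc b : (0 < y b)%N -> (layer (hd b) <= (layer (tl b)).+1)%N.
Proof.
move=> y_b; rewrite /layer; case: D => [|D']; first by rewrite !big_ord0.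
rewrite big_ord_recl big_ord_recr /=.
have step : (\sum_(k < D') ~~ reach (bump 0 k) (hd b) <= \sum_(k < D') ~~ reach k (tl b))%N.
  apply: leq_sum => k _; rewrite /bump leq0n add1n /=.
  case: (boolP (reach k (tl b))) => [reach_tl|_]; last exact: leq_b1.
  suff -> : [exists c, [&& (0 < y c)%N, hd c == hd b & reach k (tl c)]] by rewrite orbT.
  by apply/existsP; exists b; rewrite y_b eqxx reach_tl.
by apply: leq_trans (leq_add (leq_b1 _) step) _; rewrite add1n ltnS leq_addr.
Qed.

Hypothesis far :
  forall p, is_path tl hd s t p -> all (fun b => 0 < y b)%N p -> (D <= size p)%N.

Lemma layer_far : layer t = D.
Proof.
rewrite /layer -[RHS]card_ord -sum1_card; apply: eq_bigr => k _.
case reach_k: (reach k t) => //=; have [p [path_p pos_p size_p]] := reach_path reach_k.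
by have := far path_p pos_p; have := ltn_ord k; lia.
Qed.

Hypotheses (st : s != t) (y_cons : forall v, v != s -> v != t -> flow_value tl hd v y = 0).

Lemma flow_value_mul_le_sum : flow_value tl hd s y * D%:Z <= (\sum_b y b)%N%:Z.
Proof.
have := sum_flow_value_weighted tl hd (fun v => (layer v)%:Z) y.
have ts : t != s by rewrite eq_sym.
rewrite (bigD1 s) //= layer_source mul0r add0r (bigD1 t) ?ts //= layer_far big1 ?addr0.
  rewrite (flow_value_sink st y_cons) mulrN mulrC => /eqP; rewrite eqr_opp => /eqP ->.
  rewrite (big_morph Posz PoszD (erefl _)); apply: ler_sum => b _.
  by case: (posnP (y b)) => [->|/layer_arc]; rewrite ?mul0r //; nia.
by move=> v /andP [vs vt]; rewrite y_cons ?mulr0.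
Qed.

End Layering.

Lemma support_h_regular (B : finType) (sa : B -> B) (h y : B -> nat) p :
  (forall b, y b + y (sa b) <= h b)%N -> all (fun b => 0 < y b)%N p -> h_regular sa h p.
Proof.
move=> y_h /allP pos; apply/andP; split; apply/allP => b b_p.
  by apply: leq_trans (y_h b); apply: leq_trans (pos b b_p) (leq_addr _ _).
by apply/implyP => /pos sa_b; have := pos b b_p; have := y_h b; lia.
Qed.

Lemma flow_value_mul_rdist_le (V B : finType) (tl hd : B -> V) (sv : V -> V)
    (sa : B -> B) (s : V) (h x : B -> nat) d :
  skew_symmetric tl hd sv sa ->
  (forall b, x b <= h b)%N -> symmetric_fun sa x ->
  (forall v, v != s -> v != sv s -> flow_value tl hd v x = 0) ->
  rdist_split tl hd sa sv h s = Some d ->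
  flow_value tl hd s x * d%:Z <= (\sum_b x b)%N%:Z.
Proof.
move=> skew x_h x_sym x_cons dist_d.
have [y [y_x y_cons]] := symmetric_flow_split skew x_sym x_cons.
have y_h b : (y b + y (sa b) <= h b)%N by rewrite y_x.
have far p : is_path tl hd s (sv s) p -> all (fun b => 0 < y b)%N p -> (d <= size p)%N.
  move=> path_p /(support_h_regular y_h) reg_p.
  have [q <- split_q] := h_regular_split (skew_saK skew) (skew_sa_neq skew) path_p reg_p.
  exact: (mindist_someP dist_d).2.
have s_sv : s != sv s by rewrite eq_sym (skew_sv_neq skew).
have sum_x : (\sum_b x b = 2 * \sum_b y b)%N.
  under eq_bigr => b _ do rewrite -y_x.
  by rewrite big_split /= (reindex_inj (inv_inj (skew_saK skew))) /= addnn mul2n.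
have value_x : flow_value tl hd s x = 2 * flow_value tl hd s y.
  rewrite (@eq_flow_value _ _ tl hd x (fun b => y b + y (sa b))%N) => [|b]; last by rewrite y_x.
  rewrite flow_valueD.
  rewrite (flow_value_mirror y s skew) (flow_value_sink s_sv y_cons) opprK; ring.
rewrite value_x sum_x PoszM -mulrA ler_pM2l //.
exact: flow_value_mul_le_sum far s_sv y_cons.
Qed.

Section ResidualGraph.
Variables (V A : finType) (tl hd : A -> V) (sa : A -> A).

Lemma skew_symmetric_plus sv : skew_symmetric tl hd sv sa ->
  skew_symmetric (tlP tl hd) (hdP tl hd) sv (saP sa).
Proof.
case=> svK sv_neq saK sa_neq ends; split => // -[] a /=.
- by rewrite saK.
- by rewrite saK.
- by apply: contra (sa_neq a) => /eqP [->].
- by apply: contra (sa_neq a) => /eqP [->].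
- exact: ends.
- by case: (ends a).
Qed.

Definition rev_arc (e : A + A) : A + A :=
  match e with inl a => inr a | inr a => inl a end.

Lemma rev_arcK : involutive rev_arc. Proof. by case. Qed.

Lemma rev_arc_sa e : rev_arc (saP sa e) = saP sa (rev_arc e). Proof. by case: e. Qed.

Lemma flow_value_rev_invariant (m : A + A -> nat) v :
  (forall e, m (rev_arc e) = m e) -> flow_value (tlP tl hd) (hdP tl hd) v m = 0.
Proof.
move=> m_rev; rewrite flow_valueE; set S := \sum_e _.
suff : S = - S by lia.
rewrite {1}/S (reindex_inj (inv_inj rev_arcK)) /= -sumrN.
by apply: eq_bigr => -[] a _; rewrite m_rev /incidence /=; ring.
Qed.

End ResidualGraph.

Section Augmentation.
Variables (V A : finType) (tl hd : A -> V) (sv : V -> V) (sa : A -> A).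
Variables (u : A -> nat) (s : V) (f : A -> nat) (g : A + A -> nat).
Hypotheses (skew : skew_symmetric tl hd sv sa) (u_sym : symmetric_fun sa u).
Hypothesis (f_IS : is_ISflow tl hd sv sa u s f).
Hypothesis (g_IS : is_ISflow (tlP tl hd) (hdP tl hd) sv (saP sa) (resid u f) s g).

Local Notation tlH := (tlP tl hd).
Local Notation hdH := (hdP tl hd).
Local Notation saH := (saP sa).
Local Notation h := (resid u f).
Local Notation h' := (resid u (oplus f g)).

Let skewH := skew_symmetric_plus skew.

Lemma resid_sym e : h (saH e) = h e.
Proof. by case: f_IS => f_sym _ _; case: e => a /=; rewrite f_sym ?u_sym. Qed.

Lemma resid_oplus e : h' e = (h e - g e + g (rev_arc e))%N.
Proof.
case: f_IS g_IS => _ f_u _ [_ g_h _].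
by case: e => a /=; rewrite /oplus; have := f_u a; have := g_h (inl a); have := g_h (inr a) => /=; lia.
Qed.

Lemma resid_oplus_sym e : h' (saH e) = h' e.
Proof. by case: g_IS => g_sym _ _; rewrite !resid_oplus resid_sym rev_arc_sa !g_sym. Qed.

Variable d : nat.
Hypothesis (dist_d : rdist_split tlH hdH saH sv h s = Some d).
Hypothesis (short : shortest tlH hdH saH sv h s g).

Section SimplePath.
Variable P : seq (A + A).
Hypotheses (path_P : is_path tlH hdH s (sv s) P) (uniq_P : uniq P).
Hypothesis reg_P : h_regular saH h' P.

Definition path_load e := (count_mem e P + count_mem (saH e) P)%N.

Definition stacked e := (g e + path_load e)%N.
Definition cancelled e := (stacked e - stacked (rev_arc e))%N.

Lemma path_load_le e : (path_load e <= h' e)%N.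
Proof.
case/andP: reg_P => /allP pos /allP mate; rewrite /path_load !count_uniq_mem //.
case: (boolP (e \in P)) => e_P; case: (boolP (saH e \in P)) => sa_e_P //=.
- by have := mate e e_P; rewrite sa_e_P.
- exact: pos.
- by rewrite -resid_oplus_sym; apply: pos.
Qed.

Lemma path_load_sym e : path_load (saH e) = path_load e.
Proof. by rewrite /path_load (skew_saK skewH) addnC. Qed.

Lemma cancelled_le e : (cancelled e <= h e)%N.
Proof.
case: g_IS => _ g_h _; have := path_load_le e; have := g_h e.
by rewrite resid_oplus /cancelled /stacked; lia.
Qed.

Lemma cancelled_sym e : cancelled (saH e) = cancelled e.
Proof.
by case: g_IS => g_sym _ _; rewrite /cancelled rev_arc_sa /stacked !g_sym !path_load_sym.
Qed.

Lemma flow_value_cancelled v : flow_value tlH hdH v cancelled =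
  flow_value tlH hdH v g + 2 * ((s == v)%:R - (sv s == v)%:R).
Proof.
(* Cancellation removes min (stacked e) (stacked e^R) from both e and e^R,
   which carries no net flow. *)
have -> : flow_value tlH hdH v cancelled = flow_value tlH hdH v stacked.
  have subn_minn a b : ((a - b)%N)%:Z = a%:Z - (minn a b)%:Z by lia.
  rewrite !flow_valueE; under eq_bigr => e _ do rewrite /cancelled subn_minn mulrBl.
  rewrite sumrB -[X in _ - X = _]flow_valueE flow_value_rev_invariant ?subr0 //.
  by move=> e; rewrite rev_arcK minnC.
rewrite /stacked /path_load !flow_valueD (flow_value_path_count _ path_P).
rewrite (flow_value_mirror (fun e => count_mem e P) v skewH) (flow_value_path_count _ path_P).
by rewrite !(inv_eq (skew_svK skew)) (skew_svK skew); ring.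
Qed.

Lemma cancelled_conserved v : v != s -> v != sv s -> flow_value tlH hdH v cancelled = 0.
Proof.
case: g_IS => _ _ g_cons vs vs'; rewrite flow_value_cancelled /flow_value g_cons //.
by rewrite eq_sym (negbTE vs) eq_sym (negbTE vs') /=; ring.
Qed.

Lemma sum_stacked : (\sum_e stacked e = \sum_e g e + 2 * size P)%N.
Proof.
rewrite /stacked /path_load !big_split /= sum_count_mem.
rewrite [X in (_ + (_ + X))%N](reindex_inj (inv_inj (skew_saK skewH))) /=.
by under [X in (_ + (_ + X))%N]eq_bigr => e _ do rewrite (skew_saK skewH); rewrite sum_count_mem addnn mul2n.
Qed.

(* The lower bound is (|g| + 2) d <= sum cancelled, rewritten with
   sum g = |g| d since g is shortest. *)
Lemma sum_cancelled_bound :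
  (\sum_e g e + 2 * d <= \sum_e cancelled e <= \sum_e g e + 2 * size P)%N.
Proof.
move: short; rewrite /shortest dist_d => sum_g.
have := flow_value_mul_rdist_le skewH cancelled_le cancelled_sym cancelled_conserved dist_d.
rewrite flow_value_cancelled eqxx (negbTE (skew_sv_neq skew s)) /= subr0 mulr1.
rewrite mulrDl -sum_g => lower; apply/andP; split; first by rewrite -lez_nat PoszD PoszM.
by rewrite -sum_stacked; apply: leq_sum => e _; apply: leq_subr.
Qed.

Lemma rdist_le_size_path : (d <= size P)%N.
Proof. by have /andP [lo hi] := sum_cancelled_bound; move: (leq_trans lo hi); lia. Qed.

(* When |P| = d the bounds above are tight, so nothing cancels. *)
Lemma rdist_sub_le_size_path : size P = d ->
  ole (rdist_split tlH hdH saH sv (fun e => h e - g e)%N s) (Some d).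
Proof.
move=> size_P; case: g_IS => _ g_h _.
have tight : (\sum_e cancelled e = \sum_e stacked e)%N.
  have /andP [lo hi] := sum_cancelled_bound; rewrite size_P in hi.
  by apply/eqP; rewrite eqn_leq sum_stacked size_P hi lo.
have := @leqif_sum _ xpredT _ _ _ (fun e _ => leqif_eq (leq_subr (stacked (rev_arc e)) (stacked e))).
rewrite -/cancelled -{}tight => -[_]; rewrite eqxx => /esym/forallP no_cancel.
have load_le e : (path_load e <= h e - g e)%N.
  have := no_cancel e; have := path_load_le e; have := g_h e; rewrite resid_oplus.
  by rewrite /cancelled /stacked => /eqP; lia.
have reg_sub : h_regular saH (fun e => h e - g e)%N P.
  apply/andP; split; apply/allP => e e_P; have := load_le e; rewrite /path_load !count_uniq_mem // e_P.
    by apply: leq_trans.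
  by case: (saH e \in P).
have [q size_q split_q] := h_regular_split (skew_saK skewH) (skew_sa_neq skewH) path_P reg_sub.
by have [n -> n_le] := rdist_split_le_size split_q; rewrite /= -size_P -size_q.
Qed.

End SimplePath.

Lemma augmenting_path_long p :
  is_path tlH hdH s (sv s) p -> h_regular saH h' p ->
  (d <= size p)%N /\
  (olt (Some d) (rdist_split tlH hdH saH sv (fun e => h e - g e)%N s) -> (d < size p)%N).
Proof.
move=> path_p reg_p; have [q [path_q uniq_q size_q sub_q]] := is_path_uniq path_p.
have reg_q := h_regular_sub reg_p sub_q.
have d_q := rdist_le_size_path path_q uniq_q reg_q.
split => [|blocking]; first exact: leq_trans d_q size_q.
apply: leq_trans size_q; rewrite ltn_neqAle d_q andbT; apply/eqP => d_eq.
have := rdist_sub_le_size_path path_q uniq_q reg_q (esym d_eq).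
by case: rdist_split blocking => //= n; lia.
Qed.

End Augmentation.

Lemma shortest_unreachable (V B : finType) (tl hd : B -> V) (sa : B -> B) (sv : V -> V)
    (h : B -> nat) s (g : B -> nat) :
  rdist_split tl hd sa sv h s = None -> shortest tl hd sa sv h s g -> forall b, g b = 0%N.
Proof.
by rewrite /shortest => -> /eqP; rewrite sum_nat_eq0 => /forallP g0 b; apply/eqP/(implyP (g0 b)).
Qed.

Theorem mainTheorem8 (V A : finType) (tl hd : A -> V) (sv : V -> V) (sa : A -> A)
  (u : A -> nat) (s : V) (f : A -> nat) (g : A + A -> nat) :
  skew_symmetric tl hd sv sa ->
  symmetric_fun sa u ->
  is_ISflow tl hd sv sa u s f ->
  is_ISflow (tlP tl hd) (hdP tl hd) sv (saP sa) (resid u f) s g ->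
  shortest (tlP tl hd) (hdP tl hd) (saP sa) sv (resid u f) s g ->
  ole (raug_dist tl hd sv sa u s f) (raug_dist tl hd sv sa u s (oplus f g)) /\
  (shortest_blocking (tlP tl hd) (hdP tl hd) (saP sa) sv (resid u f) s g ->
   olt (raug_dist tl hd sv sa u s f) (raug_dist tl hd sv sa u s (oplus f g))).
Proof.
move=> skew u_sym f_IS g_IS short.
case dist: (rdist_split (tlP tl hd) (hdP tl hd) (saP sa) sv (resid u f) s) => [d|]; last first.
  have -> : oplus f g = f.
    by apply: functional_extensionality => a; rewrite /oplus !(shortest_unreachable dist short) addn0 subn0.
  split => [|[_]]; last by rewrite dist.
  by case: raug_dist => //= n; apply: leqnn.
have [k raug_k k_d] := regular_dist_le_rdist_split (resid_sym u_sym f_IS) dist.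
rewrite /raug_dist raug_k; case raug': mindist => [k'|] //.
have [[p /andP [path_p reg_p] <-] _] := mindist_someP raug'.
have [d_p d_p_strict] := augmenting_path_long skew u_sym f_IS g_IS dist short path_p reg_p.
split => [|[_]] /=; first exact: leq_trans k_d d_p.
by rewrite dist => /d_p_strict; apply: leq_ltn_trans k_d.
Qed.
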